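(* Let $1\le p\le\infty$ and let $A=\{[x_i^a,y_i^a]\}_{i=1}^{n_a}$ and $B=\{[x_i^b,y_i^b]\}_{i=1}^{n_b}$ be persistence barcodes in $\mathcal{B}_F$ with positive total lengths $L_a,L_b>0$. If the relative error satisfies $r_p(A,B)<1/4$, then $$|E(A)-E(B)|\le 2r_p(A,B)\left[\log(n_{\max})-\log\big(2r_p(A,B)\big)\right].$$
   Context: A persistence barcode is a finite multiset of intervals $[x,y]$ with $x\le y$; $\mathcal{B}_F$ denotes the set of persistence barcodes all of whose intervals have finite endpoints ($x,y\in\mathbb{R}$). For $A=\{[x_i^a,y_i^a]\}_{i=1}^{n_a}$ write $\ell_i^a=y_i^a-x_i^a$ and $L_a=\sum_i\ell_i^a$; similarly for $B$. Put $n_{\max}=\max\{n_a,n_b\}$, $L_{\max}=\max\{L_a,L_b\}$. The $p$-th Wasserstein distance: if $n_a\neq n_b$, add intervals of zero length $[t,t]$ to the smaller barcode until both have $n_{\max}$ intervals; then for $1\le p<\infty$, $d_p(A,B)=\big(\min_\gamma\sum_{i=1}^{n_{\max}}\max\{|x_i^a-x^b_{\gamma(i)}|^p,|y_i^a-y^b_{\gamma(i)}|^p\}\big)^{1/p}$ and $d_\infty(A,B)=\min_\gamma\max_i\max\{|x_i^a-x^b_{\gamma(i)}|,|y_i^a-y^b_{\gamma(i)}|\}$, the minimum being over bijections $\gamma$ between the (padded) multisets (and the choices of added zero-length intervals). The persistent entropy of $A\in\mathcal{B}_F$ with $L_a>0$ is $E(A)=-\sum_{i=1}^{n_a}\frac{\ell_i^a}{L_a}\log\frac{\ell_i^a}{L_a}$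 (with $0\log 0=0$). The relative error is $r_p(A,B)=\dfrac{2\,n_{\max}^{1-1/p}\,d_p(A,B)}{L_{\max}}$, where $n_{\max}^{1-1/\infty}=n_{\max}$. Convention: $0\log 0=0$. *)

From HB Require Import structures.
From mathcomp Require Import all_boot all_order all_algebra all_fingroup.
From mathcomp Require Import all_classical all_reals all_analysis.
Set Implicit Arguments. Unset Strict Implicit. Unset Printing Implicit Defensive.
Import Order.TTheory GRing.Theory Num.Theory.
Local Open Scope classical_set_scope.
Local Open Scope ring_scope.

Section Barcodes.
Variable R : realType.

(* A barcode in B_F: a finite multiset of intervals [x,y], x <= y, with
   finite endpoints, represented as a list of pairs (x, y) (order irrelevant). *)
Definition barcode (A : seq (R * R)) : bool := all (fun I => I.1 <= I.2) A.

Definition bar_len (I : R * R) : R := I.2 - I.1.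
Definition total_len (A : seq (R * R)) : R := \sum_(I <- A) bar_len I.
Definition nmax (A B : seq (R * R)) : nat := maxn (size A) (size B).
Definition Lmax (A B : seq (R * R)) : R := Num.max (total_len A) (total_len B).

Definition pad (A : seq (R * R)) (ts : seq R) : seq (R * R) :=
  A ++ [seq (t, t) | t <- ts].

Definition mcost (q : R) n (A' B' : seq (R * R)) (s : 'S_n) (i : 'I_n) : R :=
  Num.max (`|(nth (0,0) A' i).1 - (nth (0,0) B' (s i)).1| `^ q)
          (`|(nth (0,0) A' i).2 - (nth (0,0) B' (s i)).2| `^ q).

Definition mcost_inf n (A' B' : seq (R * R)) (s : 'S_n) (i : 'I_n) : R :=
  Num.max (`|(nth (0,0) A' i).1 - (nth (0,0) B' (s i)).1|)
          (`|(nth (0,0) A' i).2 - (nth (0,0) B' (s i)).2|).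

Definition wcosts (q : R) (A B : seq (R * R)) : set R :=
  [set c | exists (ta tb : seq R) (s : 'S_(nmax A B)),
     [/\ size ta = (nmax A B - size A)%N, size tb = (nmax A B - size B)%N &
         c = \sum_(i < nmax A B) mcost q (pad A ta) (pad B tb) s i]].

Definition wcosts_inf (A B : seq (R * R)) : set R :=
  [set c | exists (ta tb : seq R) (s : 'S_(nmax A B)),
     [/\ size ta = (nmax A B - size A)%N, size tb = (nmax A B - size B)%N &
         c = \big[Num.max/0]_(i < nmax A B) mcost_inf (pad A ta) (pad B tb) s i]].

(* p-th Wasserstein distance, p in [1, +oo] given as an extended real;
   the minimum of the paper is written as an infimum (it is attained). *)
Definition wdist (p : \bar R) (A B : seq (R * R)) : R :=
  match p with
  | EFin q => (inf (wcosts q A B)) `^ q^-1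
  | _ => inf (wcosts_inf A B)
  end.

Definition xlnx (x : R) : R := if x == 0 then 0 else x * ln x.

Definition pentropy (A : seq (R * R)) : R :=
  - \sum_(I <- A) xlnx (bar_len I / total_len A).

Definition nfactor (p : \bar R) (n : nat) : R :=
  match p with
  | EFin q => (n%:R) `^ (1 - q^-1)
  | _ => n%:R
  end.

Definition relerr (p : \bar R) (A B : seq (R * R)) : R :=
  2 * nfactor p (nmax A B) * wdist p A B / Lmax A B.

End Barcodes.

From HB Require Import structures.
From mathcomp Require Import all_boot all_order all_algebra all_fingroup.
From mathcomp Require Import all_classical all_reals all_analysis.
From mathcomp Require Import ring lra.
Set Implicit Arguments. Unset Strict Implicit. Unset Printing Implicit Defensive.
Import Order.TTheory GRing.Theory Num.Theory.
Local Open Scope ring_scope.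

(* Pad both barcodes with zero-length bars to n = n_max bars and normalise the
   bar lengths into probability vectors P and Q on n points. For any matching
   s, |l_i - l'_(s i)| is at most twice the matching cost of bar i, so
   sum_i |P_i - Q_(s i)| <= 4 (l^1 matching cost) / L_max, and the power-mean
   inequality bounds the l^1 cost by n^(1-1/p) times the l^p cost; hence a best
   s gives sum_i |P_i - Q_(s i)| <= 2 r_p. The entropy difference is then a
   Fannes-type estimate: |x ln x - y ln y| <= -t ln t for t = |x - y| <= 1/2,
   the Gibbs bound sum_i -t_i ln t_i <= T ln n - T ln T with T = sum_i t_i,
   and monotonicity of T ln n - T ln T on [0, 1/2] when n >= 2. *)
Section XlnX.
Variable R : realType.
Implicit Types a b x y t : R.

Lemma mul_lnB_le a b : 0 < a -> 0 < b -> b * (ln a - ln b) <= a - b.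
Proof.
move=> a0 b0; rewrite -ln_div ?posrE //.
have ab : -1 < a / b - 1 by rewrite ltrBrDl; have := divr_gt0 a0 b0; lra.
have := le_ln1Dx ab; rewrite [1 + _]addrC subrK => le_ln.
have -> : a - b = b * (a / b - 1) by rewrite mulrBr mulr1 mulrCA divff ?gt_eqF ?mulr1.
by rewrite ler_pM2l.
Qed.

Lemma ln2_ge_half : 2^-1 <= ln (2 : R).
Proof. by have := @mul_lnB_le 1 2 ltr01 (ltr0Sn _ 1); rewrite ln1; lra. Qed.

Lemma xlnxE x : xlnx x = x * ln x.
Proof. by rewrite /xlnx; case: eqP => [->|]; rewrite ?mul0r. Qed.

Lemma xlnxD_ge x t : 0 <= x -> 0 <= t -> xlnx x + xlnx t <= xlnx (x + t).
Proof.
rewrite !xlnxE => x0 t0; rewrite mulrDl.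
have [->|x_neq0] := eqVneq x 0; first by rewrite !mul0r !add0r.
have [->|t_neq0] := eqVneq t 0; first by rewrite !mul0r !addr0.
have xp : 0 < x by rewrite lt_neqAle eq_sym x_neq0.
have tp : 0 < t by rewrite lt_neqAle eq_sym t_neq0.
by apply: lerD; rewrite ler_pM2l // ler_ln ?posrE ?addr_gt0 // ?lerDl ?lerDr.
Qed.

Lemma ler_mul_lnDB x y t : 0 < x -> x <= y -> 0 < t ->
  x * (ln (x + t) - ln x) <= y * (ln (y + t) - ln y).
Proof.
move=> x0 xy t0; have y0 : 0 < y by apply: lt_le_trans xy.
have hy := mul_lnB_le y0 (addr_gt0 y0 t0).
have hxy := mul_lnB_le (mulr_gt0 y0 (addr_gt0 x0 t0)) (mulr_gt0 (addr_gt0 y0 t0) x0).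
rewrite !lnM ?posrE ?addr_gt0 // in hxy.
have h : 0 <= (y - x) * (y - (y + t) - (y + t) * (ln y - ln (y + t))).
  by apply: mulr_ge0; rewrite subr_ge0.
rewrite -subr_ge0 -(pmulr_rge0 _ (addr_gt0 y0 t0)); nra.
Qed.

Lemma xlnx_le_compl t : 0 <= t -> t <= 2^-1 -> xlnx t <= xlnx (1 - t).
Proof.
rewrite !xlnxE le_eqVlt => /predU1P[<-|t0 th]; first by rewrite mul0r subr0 ln1 mulr0.
have t1 : 0 < 1 - t by lra.
have h1 := mul_lnB_le t0 t1.
have h2 := mul_lnB_le ltr01 t1; rewrite ln1 in h2.
have h3 : 0 <= t * (t - (1 - t) - (1 - t) * (ln t - ln (1 - t))) by apply: mulr_ge0; lra.
have h4 : 0 <= (1 - 2 * t) * (1 - (1 - t) - (1 - t) * (0 - ln (1 - t))).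
  by apply: mulr_ge0; lra.
rewrite -subr_ge0 -(pmulr_rge0 _ t1); nra.
Qed.

Lemma xlnxD_le x t : 0 <= x -> 0 <= t -> t <= 2^-1 -> x + t <= 1 ->
  xlnx (x + t) - xlnx x <= - xlnx t.
Proof.
move=> x0 t0 th xt1.
have [->|t_neq0] := eqVneq t 0; first by rewrite addr0 subrr xlnxE mul0r oppr0.
have tp : 0 < t by rewrite lt_neqAle eq_sym t_neq0.
have ln_xt : ln (x + t) <= 0 by apply: ln_le0.
rewrite !xlnxE mulrDl; have [x_eq0|x_neq0] := eqVneq x 0.
  rewrite x_eq0 add0r in ln_xt *; have := mulr_ge0_le0 (ltW tp) ln_xt.
  by rewrite !mul0r add0r subr0; lra.
have xp : 0 < x by rewrite lt_neqAle eq_sym x_neq0.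
have := ler_mul_lnDB xp (_ : x <= 1 - t) tp; rewrite subrK ln1 => /(_ ltac:(lra)) incr.
have := xlnx_le_compl t0 th; rewrite !xlnxE => compl.
have : t * ln (x + t) <= 0 by rewrite mulr_ge0_le0 // ltW.
lra.
Qed.

Lemma xlnx_dist_le x y : 0 <= x <= 1 -> 0 <= y <= 1 -> `|x - y| <= 2^-1 ->
  `|xlnx y - xlnx x| <= - xlnx `|x - y|.
Proof.
wlog xy : x y / x <= y.
  move=> wlog_xy hx hy hxy; have [le_xy|lt_yx] := leP x y; first exact: wlog_xy.
  rewrite distrC (distrC x); apply: wlog_xy => //; [exact: ltW | by rewrite distrC].
have [t t0 ->] : exists2 t, 0 <= t & y = x + t.
  by exists (y - x); rewrite ?subr_ge0 // addrC subrK.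
rewrite opprD addNKr normrN ger0_norm // => /andP[x0 _] /andP[_ y1] th.
rewrite ler_norml (xlnxD_le x0 t0 th y1) andbT.
by have := xlnxD_ge x0 t0; lra.
Qed.

End XlnX.

Section Entropy.
Variable R : realType.

Definition entropy n (P : 'I_n -> R) : R := - \sum_i xlnx (P i).

Definition fannes_bound n (S : R) : R := S * ln n%:R - xlnx S.

Lemma ler_term_sum n (F : 'I_n -> R) i : (forall j, 0 <= F j) -> F i <= \sum_j F j.
Proof. by move=> F0; rewrite (bigD1 i) //= lerDl sumr_ge0. Qed.

Lemma entropy_perm n (P : 'I_n -> R) (s : 'S_n) : entropy (P \o s) = entropy P.
Proof. by rewrite /entropy [in RHS](reindex_inj (@perm_inj _ s)). Qed.

Lemma sum_neg_xlnx_le n (t : 'I_n -> R) : (0 < n)%N -> (forall i, 0 <= t i) ->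
  \sum_i - xlnx (t i) <= fannes_bound n (\sum_i t i).
Proof.
move=> n0 t0; set T := \sum_i t i; rewrite /fannes_bound xlnxE.
have np : (0 : R) < n%:R by rewrite ltr0n.
have [T_eq0|T_neq0] := eqVneq T 0.
  have {}t0 i : t i = 0 by apply/eqP; rewrite eq_le t0 andbT -T_eq0 ler_term_sum.
  by rewrite T_eq0 !mul0r subrr big1 // => i _; rewrite t0 xlnxE mul0r oppr0.
have Tp : 0 < T by rewrite lt_neqAle eq_sym T_neq0 sumr_ge0.
have pointwise i : - xlnx (t i) <= T / n%:R - t i + t i * (ln n%:R - ln T).
  rewrite xlnxE; have [->|ti_neq0] := eqVneq (t i) 0.
    by rewrite !mul0r oppr0 !addr0 divr_ge0 // ltW.
  have tip : 0 < t i by rewrite lt_neqAle eq_sym ti_neq0 t0.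
  have := mul_lnB_le (divr_gt0 Tp np) tip; rewrite ln_div ?posrE //; nra.
apply: le_trans (ler_sum _ (fun i _ => pointwise i)) _.
rewrite !big_split /= sumrN sumr_const card_ord -mulr_suml -/T.
by rewrite -(mulr_natr (T / n%:R)) divfK ?gt_eqF // subrr add0r mulrBr.
Qed.

Lemma fannes_bound0 n : fannes_bound n 0 = 0.
Proof. by rewrite /fannes_bound xlnxE !mul0r subrr. Qed.

Lemma fannes_bound_ge0 n S : (0 < n)%N -> 0 <= S <= 1 -> 0 <= fannes_bound n S.
Proof.
move=> n0 /andP[S0 S1]; rewrite /fannes_bound xlnxE subr_ge0.
apply: (@le_trans _ _ 0); first by rewrite mulr_ge0_le0 // ln_le0.
by rewrite mulr_ge0 // ln_ge0 // ler1n.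
Qed.

Lemma ler_fannes_bound n T S : (1 < n)%N -> 0 <= T -> T <= S -> S <= 2^-1 ->
  fannes_bound n T <= fannes_bound n S.
Proof.
move=> n1 T0 TS S_half.
have [->|T_neq0] := eqVneq T 0.
  rewrite fannes_bound0 fannes_bound_ge0 ?(ltnW n1) //.
  by apply/andP; split; lra.
have Tp : 0 < T by rewrite lt_neqAle eq_sym T_neq0.
have Sp : 0 < S by apply: lt_le_trans TS.
have tangent := mul_lnB_le Sp Tp.
have ln_n : ln 2 <= ln (n%:R : R) by rewrite ler_ln ?posrE ?ltr0n ?(ler_nat R 2 n) // ltnW.
have ln_S : ln S <= - ln 2.
  by rewrite -lnV ?posrE // ler_ln ?posrE ?invr_gt0.
have slope : 0 <= (S - T) * (ln n%:R - ln S - 1).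
  by apply: mulr_ge0; have := ln2_ge_half R; lra.
rewrite /fannes_bound !xlnxE; nra.
Qed.

Lemma prob_le1 n (P : 'I_n -> R) i : (forall j, 0 <= P j) -> \sum_j P j = 1 -> P i <= 1.
Proof. by move=> P0 <-; apply: ler_term_sum. Qed.

Lemma entropy_dist_le n (P Q : 'I_n -> R) S :
  (forall i, 0 <= P i) -> \sum_i P i = 1 -> (forall i, 0 <= Q i) -> \sum_i Q i = 1 ->
  \sum_i `|P i - Q i| <= S -> S <= 2^-1 ->
  `|entropy P - entropy Q| <= fannes_bound n S.
Proof.
move=> P0 P1 Q0 Q1 PQ_S S_half; set T := \sum_i `|P i - Q i|.
have T0 : 0 <= T by apply: sumr_ge0.
have n0 : (0 < n)%N by case: n P P1 {P0 Q Q0 Q1 PQ_S T T0} => // P; rewrite big_ord0; lra.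
have entropy_T : `|entropy P - entropy Q| <= fannes_bound n T.
  apply: le_trans (sum_neg_xlnx_le n0 (fun i => normr_ge0 _)).
  rewrite /entropy opprK addrC -sumrB; apply: le_trans (ler_norm_sum _ _ _) _.
  apply: ler_sum => i _; apply: xlnx_dist_le; rewrite ?P0 ?Q0 ?prob_le1 //.
  by apply: le_trans S_half; apply: le_trans PQ_S; apply: ler_term_sum.
apply: le_trans entropy_T _.
have [n1|n_le1] := ltnP 1 n; first by apply: ler_fannes_bound; rewrite // (le_trans T0).
suff -> : T = 0 by rewrite fannes_bound0 fannes_bound_ge0 // (le_trans T0 PQ_S) /=; lra.
have n_eq1 : n = 1%N by apply/eqP; rewrite eqn_leq n_le1 n0.
subst n; move: P1 Q1; rewrite /T !big_ord1 => -> ->.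
by rewrite subrr normr0.
Qed.

End Entropy.

Section Norms.
Variable R : realType.

Lemma l1_normalize_le n (a b : 'I_n -> R) :
  (forall i, 0 <= a i) -> (forall i, 0 <= b i) -> 0 < \sum_i a i -> 0 < \sum_i b i ->
  \sum_i `|a i / \sum_j a j - b i / \sum_j b j| <=
  2 * (\sum_i `|a i - b i|) / Num.max (\sum_i a i) (\sum_i b i).
Proof.
wlog Sba : a b / \sum_i b i <= \sum_i a i.
  move=> wlog_ab a0 b0 Sa0 Sb0.
  have [Sba|Sab] := orP (le_total (\sum_i b i) (\sum_i a i)); first exact: wlog_ab.
  rewrite maxC (eq_bigr _ (fun i _ => distrC (a i) (b i))).
  rewrite (eq_bigr _ (fun i _ => distrC (a i / _) _)).
  exact: wlog_ab.
move=> a0 b0 Sa0 Sb0; rewrite max_l //.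
set Sa := \sum_i a i; set Sb := \sum_i b i; set D := \sum_i `|a i - b i|.
have ia0 : 0 < Sa^-1 by rewrite invr_gt0.
have ia_le : Sa^-1 <= Sb^-1 by rewrite lef_pV2 ?posrE.
have pointwise i : `|a i / Sa - b i / Sb| <= `|a i - b i| * Sa^-1 + b i * (Sb^-1 - Sa^-1).
  have -> : a i / Sa - b i / Sb = (a i - b i) * Sa^-1 - b i * (Sb^-1 - Sa^-1) by ring.
  apply: le_trans (ler_normB _ _) _.
  by rewrite !normrM (gtr0_norm ia0) (ger0_norm (b0 i)) (@ger0_norm _ (Sb^-1 - _)) ?subr_ge0.
apply: le_trans (ler_sum _ (fun i _ => pointwise i)) _.
rewrite big_split /= -!mulr_suml -/D -/Sb.
have SaSb_le : Sa - Sb <= D by rewrite -sumrB; apply: ler_sum => i _; apply: ler_norm.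
have : (Sa - Sb) / Sa <= D / Sa by rewrite ler_pM2r.
by rewrite mulrBr divff ?gt_eqF // mulrBl divff ?gt_eqF // -mulrA; lra.
Qed.

Lemma ler_powRV (q x y : R) : 0 < q -> 0 <= x -> 0 <= y ->
  (x <= y `^ q^-1) = (x `^ q <= y).
Proof.
move=> q0 x0 y0; have qV0 : 0 <= q^-1 by rewrite invr_ge0 ltW.
apply/idP/idP => [/(ge0_ler_powR (ltW q0))|/(ge0_ler_powR qV0)].
  by rewrite -powRrM mulVf ?gt_eqF // powRr1 //; apply; rewrite nnegrE ?powR_ge0.
by rewrite -powRrM mulfV ?gt_eqF // powRr1 //; apply; rewrite nnegrE ?powR_ge0.
Qed.

Lemma sum_le_lq_norm n (m : 'I_n -> R) q : (0 < n)%N -> 1 <= q -> (forall i, 0 <= m i) ->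
  \sum_i m i <= n%:R `^ (1 - q^-1) * (\sum_i m i `^ q) `^ q^-1.
Proof.
move=> n0 q1 m0; have np : (0 : R) < n%:R by rewrite ltr0n.
have [->|q_neq1] := eqVneq q 1.
  rewrite invr1 subrr powRr0 mul1r powRr1; last by apply: sumr_ge0 => i _; apply: powR_ge0.
  by rewrite (eq_bigr (fun i => m i `^ 1)) // => i _; rewrite powRr1.
have q_gt1 : 1 < q by rewrite lt_neqAle eq_sym q_neq1.
have q0 : 0 < q by lra.
set S := \sum_i m i `^ q.
have [S_eq0|S_neq0] := eqVneq S 0.
  have m_eq0 i : m i = 0.
    apply: (@powR_eq0_eq0 _ _ q); apply/eqP; rewrite eq_le powR_ge0 andbT -S_eq0.
    by rewrite /S; apply: ler_term_sum => j; apply: powR_ge0.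
  by rewrite big1 // mulr_ge0 ?powR_ge0.
have Sp : 0 < S by rewrite lt_neqAle eq_sym S_neq0 sumr_ge0 // => i _; apply: powR_ge0.
(* Young's inequality for lam * m i; the weight lam = (n / S)^(1/q) makes
   the summed bound equal n *)
set lam := (n%:R / S) `^ q^-1.
have lam0 : 0 < lam by apply: powR_gt0; apply: divr_gt0.
have lamq : lam `^ q = n%:R / S.
  by rewrite /lam -powRrM mulVf ?gt_eqF // powRr1 // ltW // divr_gt0.
set q' := q / (q - 1).
have q'0 : 0 < q' by apply: divr_gt0; lra.
have qq' : q^-1 + q'^-1 = 1 by rewrite /q' invf_div; field; rewrite gt_eqF //; lra.
have young i : lam * m i <= m i `^ q * (n%:R / S) / q + q'^-1.
  have := conjugate_powR (mulr_ge0 (ltW lam0) (m0 i)) ler01 q0 q'0 qq'.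
  by rewrite mulr1 powR1 powRM ?(ltW lam0) // lamq mul1r (mulrC (n%:R / S)) mulrA.
have lam_sum : lam * \sum_i m i <= n%:R.
  rewrite mulr_sumr; apply: le_trans (ler_sum _ (fun i _ => young i)) _.
  rewrite big_split /= sumr_const card_ord -!mulr_suml -/S mulrCA mulfV ?gt_eqF // mulr1.
  by rewrite -mulr_natl (_ : q'^-1 = 1 - q^-1); lra.
have lam_norm : n%:R `^ (1 - q^-1) * S `^ q^-1 * lam = n%:R.
  rewrite /lam -mulrA -powRM ?(ltW Sp) ?divr_ge0 ?(ltW np) //.
  rewrite mulrCA mulfV ?gt_eqF // mulr1 -powRD ?subrK ?powRr1 ?oner_eq0 //.
  exact: ltW.
by rewrite -(ler_pM2r lam0) lam_norm mulrC.
Qed.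

End Norms.

Section Barcodes.
Variable R : realType.
Implicit Types (A B : seq (R * R)) (ta tb : seq R).

Definition len_vec n A : 'I_n -> R := fun i => bar_len (nth (0, 0) A i).
Arguments len_vec : clear implicits.

Definition len_prob n A : 'I_n -> R := fun i => len_vec n A i / total_len A.
Arguments len_prob : clear implicits.

Lemma big_bar_len_nth (g : R -> R) n A : (size A <= n)%N -> g 0 = 0 ->
  \sum_(I <- A) g (bar_len I) = \sum_(i < n) g (len_vec n A i).
Proof.
move=> An g0; rewrite (big_nth (0, 0)) big_mkord -(subnKC An) big_split_ord /=.
rewrite [X in _ + X]big1 ?addr0 // => i _.
by rewrite /len_vec nth_default ?leq_addr // /bar_len subrr.
Qed.

Lemma total_lenE n A : (size A <= n)%N -> total_len A = \sum_i len_vec n A i.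
Proof. by move=> An; rewrite /total_len (big_bar_len_nth (g := id) An). Qed.

Lemma pentropyE n A : (size A <= n)%N -> pentropy A = entropy (len_prob n A).
Proof.
move=> An; rewrite /pentropy (big_bar_len_nth (g := fun x => xlnx (x / _)) An) //.
by rewrite mul0r xlnxE mul0r.
Qed.

Lemma len_vec_ge0 n A i : barcode A -> 0 <= len_vec n A i.
Proof.
move=> /(all_nthP (0, 0)) A_ge0; rewrite /len_vec /bar_len.
have [iA|Ai] := ltnP i (size A); first by rewrite subr_ge0 A_ge0.
by rewrite nth_default // subrr.
Qed.

Lemma len_prob_ge0 n A i : barcode A -> 0 < total_len A -> 0 <= len_prob n A i.
Proof. by move=> bA LA0; rewrite divr_ge0 ?len_vec_ge0 ?ltW. Qed.

Lemma len_prob_sum1 n A : (size A <= n)%N -> 0 < total_len A -> \sum_i len_prob n A i = 1.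
Proof. by move=> An LA0; rewrite -mulr_suml -total_lenE ?divff ?gt_eqF. Qed.

Lemma len_vec_pad n A ta : len_vec n (pad A ta) =1 len_vec n A.
Proof.
move=> i; rewrite /len_vec /pad nth_cat; case: ltnP => // Ai.
rewrite [nth _ A i]nth_default // /bar_len subrr.
have [ita|] := ltnP (i - size A) (size ta); first by rewrite (nth_map 0) // subrr.
by move=> ta_i; rewrite nth_default ?size_map // subrr.
Qed.

Lemma bar_len_dist (I J : R * R) :
  `|bar_len I - bar_len J| <= 2 * Num.max `|I.1 - J.1| `|I.2 - J.2|.
Proof.
have -> : bar_len I - bar_len J = (I.2 - J.2) - (I.1 - J.1) by rewrite /bar_len; ring.
have := le_max `|I.1 - J.1| `|I.1 - J.1| `|I.2 - J.2|.
have := le_max `|I.2 - J.2| `|I.1 - J.1| `|I.2 - J.2|.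
rewrite !lexx orbT /= => le2 le1.
by apply: le_trans (ler_normB _ _) _; lra.
Qed.

Lemma mcost_inf_ge0 n A' B' (s : 'S_n) i : 0 <= mcost_inf A' B' s i.
Proof. by rewrite /mcost_inf le_max normr_ge0. Qed.

Lemma mcost_powR q n A' B' (s : 'S_n) i : 0 <= q ->
  mcost q A' B' s i = mcost_inf A' B' s i `^ q.
Proof.
move=> q0; rewrite /mcost /mcost_inf.
have [le_uv|le_vu] := orP (le_total `|(nth (0, 0) A' i).1 - (nth (0, 0) B' (s i)).1|
                                    `|(nth (0, 0) A' i).2 - (nth (0, 0) B' (s i)).2|).
  by rewrite !max_r // ge0_ler_powR ?nnegrE.
by rewrite !max_l // ge0_ler_powR ?nnegrE.
Qed.

Lemma l1_len_prob_le n A B ta tb (s : 'S_n) :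
  barcode A -> barcode B -> 0 < total_len A -> 0 < total_len B ->
  (size A <= n)%N -> (size B <= n)%N ->
  \sum_i `|len_prob n A i - len_prob n B (s i)| <=
  4 * (\sum_i mcost_inf (pad A ta) (pad B tb) s i) / Lmax A B.
Proof.
move=> bA bB LA0 LB0 An Bn; pose b' := len_vec n B \o s.
have LAE := total_lenE An.
have LBE : total_len B = \sum_i b' i by rewrite (total_lenE Bn) (reindex_inj (@perm_inj _ s)).
have := l1_normalize_le (fun i => @len_vec_ge0 n A i bA) (fun i => @len_vec_ge0 n B (s i) bB).
rewrite -LAE -LBE => /(_ LA0 LB0) /le_trans; apply.
have cost_le : \sum_i `|len_vec n A i - b' i| <= 2 * \sum_i mcost_inf (pad A ta) (pad B tb) s i.
  rewrite mulr_sumr; apply: ler_sum => i _.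
  rewrite /b' /= -(@len_vec_pad n A ta) -(@len_vec_pad n B tb); exact: bar_len_dist.
have L0 : 0 < Lmax A B by rewrite lt_max LA0.
by rewrite ler_pM2r ?invr_gt0 // (_ : 4 = 2 * 2) -?mulrA ?ler_pM2l //; lra.
Qed.

End Barcodes.
Arguments len_prob {R} n A.

Section Wasserstein.
Variable R : realType.
Implicit Types (A B : seq (R * R)).

Definition padding A B (ta tb : seq R) : Prop :=
  size ta = (nmax A B - size A)%N /\ size tb = (nmax A B - size B)%N.

Lemma le_inf_wcosts q A B c :
  (forall ta tb (s : 'S_(nmax A B)), padding A B ta tb ->
     c <= \sum_i mcost q (pad A ta) (pad B tb) s i) ->
  c <= inf (wcosts q A B).
Proof.
move=> c_le; apply: lb_le_inf => [|_ [ta [tb [s [sa sb ->]]]]]; last exact: c_le.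
eexists; exists (nseq (nmax A B - size A) 0), (nseq (nmax A B - size B) 0), 1%g.
by rewrite !size_nseq.
Qed.

Lemma le_inf_wcosts_inf A B c :
  (forall ta tb (s : 'S_(nmax A B)), padding A B ta tb ->
     c <= \big[Num.max/0]_i mcost_inf (pad A ta) (pad B tb) s i) ->
  c <= inf (wcosts_inf A B).
Proof.
move=> c_le; apply: lb_le_inf => [|_ [ta [tb [s [sa sb ->]]]]]; last exact: c_le.
eexists; exists (nseq (nmax A B - size A) 0), (nseq (nmax A B - size B) 0), 1%g.
by rewrite !size_nseq.
Qed.

Lemma le_nfactor_wdist p A B c : (1%:E <= p)%E -> (0 < nmax A B)%N -> 0 <= c ->
  (forall ta tb (s : 'S_(nmax A B)), padding A B ta tb ->
     c <= \sum_i mcost_inf (pad A ta) (pad B tb) s i) ->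
  c <= nfactor p (nmax A B) * wdist p A B.
Proof.
set n := nmax A B => + n0 c0 c_le; have np : (0 : R) < n%:R by rewrite ltr0n.
case: p => [q q1|_|//]; rewrite /nfactor /wdist.
  rewrite lee_fin in q1; have q0 : 0 < q by lra.
  set N := n%:R `^ (1 - q^-1); have N0 : 0 < N by apply: powR_gt0.
  have cN0 : 0 <= c / N by rewrite divr_ge0 // ltW.
  have cNq_le : (c / N) `^ q <= inf (wcosts q A B).
    apply: le_inf_wcosts => ta tb s pads.
    rewrite (eq_bigr _ (fun i _ => mcost_powR _ _ _ _ (ltW q0))).
    rewrite -ler_powRV ?sumr_ge0 // => [|i _]; last exact: powR_ge0.
    rewrite ler_pdivrMr // mulrC; apply: le_trans (c_le _ _ _ pads) _.
    exact: sum_le_lq_norm n0 q1 (fun i => mcost_inf_ge0 _ _ _ _).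
  rewrite mulrC -ler_pdivrMr // ler_powRV //; exact: le_trans (powR_ge0 _ _) cNq_le.
rewrite mulrC -ler_pdivrMr //; apply: le_inf_wcosts_inf => ta tb s pads.
set M := \big[Num.max/0]_i _; rewrite ler_pdivrMr //; apply: le_trans (c_le _ _ _ pads) _.
have -> : M * n%:R = \sum_(i < n) M by rewrite sumr_const card_ord mulr_natr.
by apply: ler_sum => i _; apply: le_bigmax.
Qed.

End Wasserstein.

Theorem theorem4 (R : realType) (p : \bar R) (A B : seq (R * R)) :
  (1%:E <= p)%E ->
  barcode A -> barcode B ->
  0 < total_len A -> 0 < total_len B ->
  relerr p A B < 4^-1 ->
  `|pentropy A - pentropy B| <=
    2 * relerr p A B * (ln ((nmax A B)%:R) - ln (2 * relerr p A B)).
Proof.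
move=> p1 bA bB LA0 LB0 r_lt.
set n := nmax A B; set r := relerr p A B in r_lt *.
have An : (size A <= n)%N by rewrite leq_maxl.
have Bn : (size B <= n)%N by rewrite leq_maxr.
have n0 : (0 < n)%N.
  apply: leq_trans An; rewrite lt0n size_eq0; apply: contraTneq LA0 => ->.
  by rewrite /total_len big_nil ltxx.
have L0 : 0 < Lmax A B by rewrite lt_max LA0.
pose P := len_prob n A; pose Q := len_prob n B.
have [s0 _ s0_min] := arg_minP (fun s : 'S_n => \sum_i `|P i - Q (s i)|) (isT : xpredT 1%g).
set T := \sum_i `|P i - Q (s0 i)|.
have T0 : 0 <= T by apply: sumr_ge0.
have T_le : T <= 2 * r.
  set W := nfactor p n * wdist p A B.
  have rE : r = 2 * W / Lmax A B by rewrite /r /relerr /W mulrA.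
  have : Lmax A B * T / 4 <= W.
    apply: le_nfactor_wdist => // [|ta tb s _]; first by rewrite divr_ge0 // mulr_ge0 // ltW.
    have := le_trans (s0_min s isT) (l1_len_prob_le ta tb s bA bB LA0 LB0 An Bn).
    by rewrite -/T ler_pdivlMr // ler_pdivrMr //; lra.
  by rewrite rE mulrA ler_pdivlMr // ler_pdivrMr //; lra.
have Q_s0 : \sum_i (Q \o s0) i = 1.
  by have := len_prob_sum1 Bn LB0; rewrite (reindex_inj (@perm_inj _ s0)).
rewrite (pentropyE An) (pentropyE Bn) -(entropy_perm Q s0).
have -> : 2 * r * (ln n%:R - ln (2 * r)) = fannes_bound n (2 * r).
  by rewrite /fannes_bound xlnxE mulrBr.
apply: entropy_dist_le => //; last by lra.
- by move=> i; apply: len_prob_ge0.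
- exact: len_prob_sum1.
- by move=> i; apply: len_prob_ge0.
Qed.
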